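(* Let $S,T\subseteq\mathbb{Z}_{>0}$ be finite and $S'\subseteq S$. Then $T\triangleleft S'\subseteq T\triangleleft S$.
   Context: For finite $S,T\subseteq\mathbb{Z}_{>0}$, $T\triangleleft S$ is computed by going through the elements of $S$ from largest to smallest; each $s$ picks the largest element of $T$ that is less than $s$ and not yet picked (if one exists); $T\triangleleft S$ is the set of picked elements. *)

From mathcomp Require Import all_boot.
From mathcomp Require Import finmap.
Set Implicit Arguments. Unset Strict Implicit. Unset Printing Implicit Defensive.
Open Scope fset_scope.

Definition tri_step (T : {fset nat}) (picked : seq nat) (s : nat) : seq nat :=
  let cands := [seq t <- enum_fset T | (t < s) && (t \notin picked)] in
  if cands is [::] then picked else (\max_(t <- cands) t) :: picked.

Definition tri (T S : {fset nat}) : {fset nat} :=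
  [fset x | x in foldl (tri_step T) [::] (sort geq (enum_fset S))].

Notation "T ◁ S" := (tri T S) (at level 40).

From mathcomp Require Import all_boot.
From mathcomp Require Import finmap.
Open Scope fset_scope.

(* Every step of the procedure only adds to the picked set, and it is monotone in
   the picked set: if a smaller picked set A ⊆ B makes s pick m, then either m is
   already in B, or m is still available for B, and it is then the largest
   available element since B has fewer candidates than A. Hence running the
   procedure on the decreasing enumeration of S' ⊆ S, a subsequence of that of S,
   inserts the extra elements of S as extra steps, which can only enlarge the
   picked set. *)

Lemma bigmax_seq_mem (c : seq nat) : c != [::] -> \max_(t <- c) t \in c.
Proof.
elim: c => // x c IHc _; rewrite big_cons inE.
have [->|/IHc max_c] := altP (c =P [::]); first by rewrite big_nil maxn0 eqxx.
by rewrite /maxn; case: ifP => _; rewrite ?max_c ?orbT ?eqxx.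
Qed.

Lemma bigmax_seq_sub (c1 c2 : seq nat) :
  {subset c2 <= c1} -> \max_(t <- c1) t \in c2 ->
  \max_(t <- c2) t = \max_(t <- c1) t.
Proof.
move=> c21 max_c1; apply/eqP; rewrite eqn_leq (leq_bigmax_seq _ max_c1) // andbT.
by apply/bigmax_leqP_seq => t /c21 t_c1 _; apply: leq_bigmax_seq.
Qed.

Lemma foldl_subseq_mono (X Y : eqType) (f : seq Y -> X -> seq Y) :
  (forall B x, {subset B <= f B x}) ->
  (forall A B x, {subset A <= B} -> {subset f A x <= f B x}) ->
  forall s1 s2 A B, subseq s1 s2 -> {subset A <= B} ->
  {subset foldl f A s1 <= foldl f B s2}.
Proof.
move=> f_ext f_mono s1 s2; elim: s2 s1 => [|y s2 IHs] [|x s1] A B //=.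
- by move=> _ AB; apply: (IHs [::]) => [|z /AB]; [exact: sub0seq | apply: f_ext].
- case: eqP => [-> | _] sub12 AB; first by apply: IHs => //; apply: f_mono.
  by apply: (IHs (x :: s1)) => // z /AB; apply: f_ext.
Qed.

Lemma subseq_sort_fsubset (K : choiceType) (leT : rel K) :
  total leT -> transitive leT -> antisymmetric leT ->
  forall A B : {fset K}, A `<=` B ->
  subseq (sort leT (enum_fset A)) (sort leT (enum_fset B)).
Proof.
move=> leT_total leT_tr leT_anti A B AB.
have -> : sort leT (enum_fset A) = sort leT [seq x <- enum_fset B | x \in A].
  apply/perm_sortP => //; apply: uniq_perm; rewrite ?filter_uniq ?fset_uniq //.
  by move=> x; rewrite mem_filter andb_idr // => /(fsubsetP AB).
exact/subseq_sort/filter_subseq.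
Qed.

Section TriStep.

Variable T : {fset nat}.

Local Notation cands B s := [seq t <- enum_fset T | (t < s) && (t \notin B)].

Lemma tri_step_ext B s : {subset B <= tri_step T B s}.
Proof.
by move=> z zB; rewrite /tri_step; case: (cands B s) => // ? ?; rewrite inE zB orbT.
Qed.

Lemma tri_step_mono A B s :
  {subset A <= B} -> {subset tri_step T A s <= tri_step T B s}.
Proof.
move=> AB z; rewrite {1}/tri_step.
have candsBA : {subset cands B s <= cands A s}.
  move=> t; rewrite !mem_filter => /andP [/andP [-> tB] ->].
  by rewrite andbT; apply: contra tB => /AB.
case candsA: (cands A s) => [|a ca]; first by move=> /AB; apply: tri_step_ext.
rewrite inE => /predU1P [->|]; last by move=> /AB; apply: tri_step_ext.
set m := \max_(t <- a :: ca) t.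
have [|mB] := boolP (m \in B); first by apply: tri_step_ext.
have m_candsA : m \in cands A s by rewrite candsA; exact: bigmax_seq_mem.
have m_candsB : m \in cands B s.
  by move: m_candsA; rewrite !mem_filter mB => /andP [/andP [-> _] ->].
rewrite /tri_step; case candsB: (cands B s) m_candsB => [//|b cb] m_candsB.
by rewrite (@bigmax_seq_sub (a :: ca)) ?mem_head // -candsA -candsB.
Qed.

End TriStep.

Theorem lemma4p14 (S S' T : {fset nat}) :
  (forall x, x \in S -> 0 < x) -> (forall x, x \in T -> 0 < x) ->
  S' `<=` S -> (T ◁ S') `<=` (T ◁ S).
Proof.
move=> _ _ S'S; apply/fsubsetP => z; rewrite /tri !inE.
apply: foldl_subseq_mono => //; [exact: tri_step_ext | exact: tri_step_mono |].
apply: subseq_sort_fsubset => //; first by move=> x y; exact: leq_total.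
- by move=> x y w yx wy; exact: leq_trans wy yx.
- by move=> x y; rewrite andbC => /anti_leq.
Qed.
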